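(* Let $n\ge 2$ and $u,v\in\{a,b\}^n$. If $\big||u|_c-|v|_c\big|=1$ for some $c\in\{a,b\}$, then $(u,v)$ is not an MAU pair.
   Context: Let $\Sigma=\{a,b\}$. For a word $w$ and a letter $c$, $|w|_c$ denotes the number of occurrences of $c$ in $w$. Two words $x,y$ are abelian equivalent, written $x\sim_{\mathrm{abl}}y$, if $|x|_c=|y|_c$ for all $c\in\Sigma$. For words $u,v$: a pair $(x,y)$ is an internal abelian-border of $(u,v)$ if $x$ is a nonempty proper suffix of $u$, $y$ is a proper prefix of $v$, and $x\sim_{\mathrm{abl}}y$; it is an external abelian-border of $(u,v)$ if $x$ is a nonempty proper prefix of $u$, $y$ is a proper suffix of $v$, and $x\sim_{\mathrm{abl}}y$. The pair $(u,v)$ is mutually abelian-bordered (MAB) if it has both an internal and an external abelian-border, and mutually abelian-unbordered (MAU) if it has neither. *)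

From HB Require Import structures.
From mathcomp Require Import all_boot.
Set Implicit Arguments. Unset Strict Implicit. Unset Printing Implicit Defensive.

Inductive letter := La | Lb.
Definition letter_eqb (x y : letter) : bool :=
  match x, y with La, La | Lb, Lb => true | _, _ => false end.
Lemma letter_eqP : Equality.axiom letter_eqb.
Proof. by case; case; constructor. Qed.
HB.instance Definition _ := hasDecEq.Build letter letter_eqP.

Definition word := seq letter.

Definition occ (w : word) (c : letter) : nat := count_mem c w.

Definition abel_equiv (x y : word) : Prop := forall c : letter, occ x c = occ y c.

Definition is_prefix (x w : word) : Prop := exists z, w = x ++ z.
Definition is_suffix (x w : word) : Prop := exists z, w = z ++ x.
Definition proper_prefix (x w : word) : Prop := is_prefix x w /\ size x < size w.
Definition proper_suffix (x w : word) : Prop := is_suffix x w /\ size x < size w.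

Definition internal_abel_border (u v x y : word) : Prop :=
  [/\ x <> [::], proper_suffix x u, proper_prefix y v & abel_equiv x y].
Definition external_abel_border (u v x y : word) : Prop :=
  [/\ x <> [::], proper_prefix x u, proper_suffix y v & abel_equiv x y].

Definition MAB (u v : word) : Prop :=
  (exists x y, internal_abel_border u v x y) /\ (exists x y, external_abel_border u v x y).
Definition MAU (u v : word) : Prop :=
  ~ (exists x y, internal_abel_border u v x y) /\ ~ (exists x y, external_abel_border u v x y).

(* Suppose |u|_c = |v|_c + 1.  Compare the number of c's in the suffix of
   length k of u with that in the prefix of length k of v.  Both counts move
   by at most one per step, and at k = n the suffix count is the larger one.
   If the suffix count is not larger at k = 1, a discrete intermediate value
   argument yields an internal abelian-border of some length 0 < k < n.
   Otherwise u ends with c and v does not start with c, and then the prefix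
   of u and the suffix of v of length n - 1 both contain |v|_c letters c:
   an external abelian-border.  The case |v|_c = |u|_c + 1 follows because
   borders of (u, v) are borders of (v, u) with the two kinds exchanged. *)

From mathcomp Require Import all_boot.
From mathcomp Require Import zify.

Lemma occ_La_add_Lb (w : word) : occ w La + occ w Lb = size w.
Proof. by rewrite /occ; elim: w => [|[] w IH] //=; rewrite -IH ?addnS. Qed.

Lemma abel_equiv_size (x y : word) : abel_equiv x y -> size x = size y.
Proof. by move=> xy; rewrite -!occ_La_add_Lb !xy. Qed.

Lemma abel_equiv_of_occ (c : letter) (x y : word) :
  size x = size y -> occ x c = occ y c -> abel_equiv x y.
Proof.
move=> sxy xy d; have := occ_La_add_Lb x; have := occ_La_add_Lb y.
by case: c d xy => -[]; lia.
Qed.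

Definition unit_steps (f : nat -> nat) : Prop := forall k, f k <= f k.+1 <= (f k).+1.

Lemma count_take_unit_steps (T : Type) (a : pred T) (s : seq T) :
  unit_steps (fun k => count a (take k s)).
Proof.
move=> k; elim: s k => [|x s IH] [|k] //=; first by rewrite take0; case: (a x).
by have := IH k; case: (a x) => /=; lia.
Qed.

Lemma unit_steps_cross {f g : nat -> nat} {a b : nat} :
  unit_steps f -> unit_steps g -> a <= b -> f a < g a -> g b < f b ->
  exists2 k, a < k < b & f k = g k.
Proof.
move=> fS gS; elim: b => [|b IH] ab fga gfb.
  by move: ab fga gfb; rewrite leqn0 => /eqP ->; lia.
have ab' : a <= b.
  by case: (eqVneq a b.+1) => [a_eq | ?]; [move: fga; rewrite a_eq; lia | lia].
have := fS b; have := gS b; case: (ltngtP (f b) (g b)) => fgb Sg Sf.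
- by lia.
- by have [k abk fgk] := IH ab' fga fgb; exists k => //; lia.
- exists b => //; case: (eqVneq a b) => [a_eq | ?]; last by lia.
  by move: fga; rewrite a_eq fgb ltnn.
Qed.

Lemma internal_abel_border_of_occ (c : letter) (u v : word) (k : nat) :
  0 < k < size u -> size v = size u ->
  occ (take k (rev u)) c = occ (take k v) c ->
  exists x y, internal_abel_border u v x y.
Proof.
move=> kn vu; rewrite /occ take_rev count_rev => E.
exists (drop (size u - k) u), (take k v); split.
- by move/(congr1 size); rewrite size_drop /=; lia.
- by split; [exists (take (size u - k) u); rewrite cat_take_drop | rewrite size_drop; lia].
- by split; [exists (drop k v); rewrite cat_take_drop | rewrite size_takel; lia].
- by apply: (abel_equiv_of_occ c) => //; rewrite size_drop size_takel; lia.
Qed.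

Lemma external_abel_border_of_occ (c : letter) (u v : word) (k : nat) :
  0 < k < size u -> size v = size u ->
  occ (take k u) c = occ (drop (size u - k) v) c ->
  exists x y, external_abel_border u v x y.
Proof.
move=> kn vu E.
exists (take k u), (drop (size u - k) v); split.
- by move/(congr1 size); rewrite size_takel /=; lia.
- by split; [exists (drop k u); rewrite cat_take_drop | rewrite size_takel; lia].
- by split; [exists (take (size u - k) v); rewrite cat_take_drop | rewrite size_drop; lia].
- by apply: (abel_equiv_of_occ c) => //; rewrite size_drop size_takel; lia.
Qed.

Lemma abel_border_swap (u v x y : word) :
  internal_abel_border u v x y <-> external_abel_border v u y x.
Proof.
have nil_swap (w w' : word) : abel_equiv w w' -> w <> [::] -> w' <> [::].
  by move=> /abel_equiv_size ww' w0 w'0; apply: w0; apply/nilP; rewrite /nilp ww' w'0.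
split=> -[x0 xu yv xy].
- by split=> //; exact: nil_swap xy x0.
- by split=> //; exact: nil_swap xy x0.
Qed.

Lemma MAU_sym (u v : word) : MAU u v -> MAU v u.
Proof.
move=> [noint noext]; split.
- by move=> [x [y /abel_border_swap ext]]; apply: noext; exists y, x.
- by move=> [x [y ext]]; apply: noint; exists y, x; apply/abel_border_swap.
Qed.

Lemma abel_border_of_occ_succ (c : letter) (u v : word) :
  2 <= size u -> size v = size u -> occ u c = (occ v c).+1 ->
  (exists x y, internal_abel_border u v x y) \/
  (exists x y, external_abel_border u v x y).
Proof.
move=> un vu uv; set n := size u in un vu *.
set S := fun k => occ (take k (rev u)) c.
set P := fun k => occ (take k v) c.
have S_steps : unit_steps S := count_take_unit_steps _ _ _.
have P_steps : unit_steps P := count_take_unit_steps _ _ _.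
have S1 : S 1 <= 1 by have /andP[_] := S_steps 0; rewrite /S take0.
have P1 : P 1 <= 1 by have /andP[_] := P_steps 0; rewrite /P take0.
case: (ltngtP (S 1) (P 1)) => SP1.
- have Sn : S n = occ u c by rewrite /S take_oversize ?size_rev // /occ count_rev.
  have Pn : P n = occ v c by rewrite /P take_oversize ?vu.
  have [|k kn SPk] := unit_steps_cross S_steps P_steps (ltnW un) SP1; first lia.
  by left; apply: (internal_abel_border_of_occ c u v k) => //; lia.
- right; apply: (external_abel_border_of_occ c u v (n - 1)) => //; rewrite -/n; first lia.
  have u_last : occ (drop (n - 1) u) c = 1.
    by move: SP1 S1; rewrite /S /occ take_rev count_rev -/n; lia.
  have v_head : occ (take 1 v) c = 0 by move: SP1 S1; rewrite /P; lia.
  have := cat_take_drop (n - 1) u; have := cat_take_drop 1 v.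
  move=> /(congr1 (count_mem c)) v_split /(congr1 (count_mem c)) u_split.
  move: u_split v_split uv u_last v_head.
  by rewrite /occ !count_cat (_ : n - (n - 1) = 1) //; lia.
- by left; apply: (internal_abel_border_of_occ c u v 1) => //; lia.
Qed.

Lemma not_MAU_of_occ_succ (c : letter) (u v : word) :
  2 <= size u -> size v = size u -> occ u c = (occ v c).+1 -> ~ MAU u v.
Proof.
by move=> un vu uv [noint noext]; case: (abel_border_of_occ_succ c u v un vu uv).
Qed.

Theorem mainTheorem10 (n : nat) (u v : word) :
  2 <= n -> size u = n -> size v = n ->
  (exists c : letter, occ u c = (occ v c).+1 \/ occ v c = (occ u c).+1) ->
  ~ MAU u v.
Proof.
move=> n2 un vn [c [uv | vu]].
- by apply: (not_MAU_of_occ_succ c); rewrite ?un ?vn.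
- by move/MAU_sym; apply: (not_MAU_of_occ_succ c); rewrite ?un ?vn.
Qed.
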